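(* Let $y$ be the solution of the problem $\varepsilon^2 y''(x)=f(x,y)$ on $(0,1)$, $y(0)=y(1)=0$, with $f$ and the Shishkin mesh $\{x_i\}_{i=0}^N$ as described in the context, and let $F$ be the discrete operator defined in the context. Assume that $\varepsilon\leqslant C_0/N$ for some constant $C_0>0$. Then there is a constant $C>0$ independent of $N$ and $\varepsilon$ such that, for the indices $i\in\{N/4,\ldots,N/2-1\}$ with $x_{i-1},x_i,x_{i+1}\in[x_{N/4},1/2]$, $$|(Fy)_i|\leqslant \frac{C}{N^2},$$ where $(Fy)_i$ denotes the $i$-th component of $F$ applied to the vector $(y(x_0),\ldots,y(x_N))^T$.
   Context: Problem: $\varepsilon^2y''(x)=f(x,y)$ on $(0,1)$, $y(0)=y(1)=0$, where $\varepsilon>0$ is a small parameter, $f\in C^k([0,1]\times\mathbb{R})$ for some $k\geq 2$, and $f_y=\partial f/\partial y\geq m>0$ on $[0,1]\times\mathbb{R}$ for a constant $m$; this problem has a unique solution $y$. Shishkin mesh: $N$ is a positive integer divisible by 4, $\lambda=\min\{1/4,\,2\varepsilon\ln N/\sqrt{m}\}$, and it is assumed that $\lambda=2\varepsilon\ln N/\sqrt{m}$. The mesh $0=x_0<x_1<\cdots<x_N=1$ is equidistant on each of $[0,\lambda]$ (with $N/4$ subintervals), $[\lambda,1-\lambda]$ (with $N/2$ subintervals) and $[1-\lambda,1]$ (with $N/4$ subintervals); thus $x_{N/4}=\lambda$, $x_{3N/4}=1-\lambda$, $x_{N/2}=1/2$, subintervals in $[0,\lambda]\cup[1-\lambda,1]$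 have length $4\lambda/N$ and those in $[\lambda,1-\lambda]$ have length $2(1-2\lambda)/N$. Scheme: $\gamma$ is a constant with $\gamma\geq f_y$, and $\beta=\sqrt{\gamma}/\varepsilon$. For $i=1,\ldots,N$ let $\ell_i=x_i-x_{i-1}$, $d_i=\beta/\tanh(\beta\ell_i)$, $a_i=\beta/\sinh(\beta\ell_i)$, $\Delta d_i=d_i-a_i$. For $v=(v_0,\ldots,v_N)^T\in\mathbb{R}^{N+1}$ define $Fv\in\mathbb{R}^{N+1}$ by $(Fv)_0=v_0$, $(Fv)_N=v_N$ and, for $i=1,\ldots,N-1$, $$(Fv)_i=\frac{\gamma}{\Delta d_i+\Delta d_{i+1}}\Big[\tfrac{a_i+d_i}{2}v_{i-1}-\big(\tfrac{a_i+d_i}{2}+\tfrac{a_{i+1}+d_{i+1}}{2}\big)v_i+\tfrac{a_{i+1}+d_{i+1}}{2}v_{i+1}-\tfrac{\Delta d_i}{\gamma}f\big(\tfrac{x_{i-1}+x_i}{2},\tfrac{v_{i-1}+v_i}{2}\big)-\tfrac{\Delta d_{i+1}}{\gamma}f\big(\tfrac{x_{i}+x_{i+1}}{2},\tfrac{v_{i}+v_{i+1}}{2}\big)\Big].$$ *)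

From Stdlib Require Import Reals.
From Coquelicot Require Import Coquelicot.
Open Scope R_scope.

Fixpoint Ck (k : nat) (f : R -> R -> R) : Prop :=
  match k with
  | O => forall p : R * R, continuous (fun q : R * R => f (fst q) (snd q)) p
  | S k' =>
      (forall p : R * R, continuous (fun q : R * R => f (fst q) (snd q)) p) /\
      exists fx fy : R -> R -> R,
        (forall x y, is_derive (fun t => f t y) x (fx x y)) /\
        (forall x y, is_derive (fun t => f x t) y (fy x y)) /\
        Ck k' fx /\ Ck k' fy
  end.

Definition shlambda (eps m : R) (N : nat) : R :=
  Rmin (1/4) (2 * eps * ln (INR N) / sqrt m).

Definition shmesh (eps m : R) (N i : nat) : R :=
  let lam := shlambda eps m N in
  if (i <=? N / 4)%nat then INR i * (4 * lam / INR N)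
  else if (i <=? 3 * N / 4)%nat then
    lam + INR (i - N / 4) * (2 * (1 - 2 * lam) / INR N)
  else (1 - lam) + INR (i - 3 * N / 4) * (4 * lam / INR N).

Section Scheme.
Variables (eps m gamma : R) (N : nat) (f : R -> R -> R).

Definition xm (i : nat) : R := shmesh eps m N i.
Definition beta : R := sqrt gamma / eps.
Definition ell (i : nat) : R := xm i - xm (i - 1).
Definition dd (i : nat) : R := beta / tanh (beta * ell i).
Definition aa (i : nat) : R := beta / sinh (beta * ell i).
Definition Ddd (i : nat) : R := dd i - aa i.

Definition Fop (v : nat -> R) (i : nat) : R :=
  if (i =? 0)%nat then v 0%nat
  else if (i =? N)%nat then v N
  else gamma / (Ddd i + Ddd (i + 1)) *
    ( (aa i + dd i) / 2 * v (i - 1)%nat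
      - ((aa i + dd i) / 2 + (aa (i + 1) + dd (i + 1)) / 2) * v i
      + (aa (i + 1) + dd (i + 1)) / 2 * v (i + 1)%nat
      - Ddd i / gamma * f ((xm (i - 1) + xm i) / 2) ((v (i - 1)%nat + v i) / 2)
      - Ddd (i + 1) / gamma * f ((xm i + xm (i + 1)) / 2) ((v i + v (i + 1)%nat) / 2)).
End Scheme.

(* Let y0 be the reduced solution, f(x, y0 x) = 0.  Since f_y >= m, the
   difference w = y - y0 satisfies eps^2 w'' >= m w - eps^2 K where w > 0
   (and symmetrically where w < 0), with K a bound for y0''.  The maximum
   principle with the barrier K eps^2/m + B (exp(-a x) + exp(-a (1 - x))),
   a = sqrt m / eps, bounds |w|; for x >= lambda = 2 eps ln N / sqrt m the
   exponentials are at most N^-2, so |y - y0| = O(N^-2) away from the layers.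
   There the mesh is uniform with step h ~ 1/N, and the scheme is
   c (v_(i-1) - 2 v_i + v_(i+1)) minus the mean of f at the two midpoints,
   where c stays bounded because beta h >= sqrt gamma / C0.  The second
   difference of y0 is O(h^2) and f at a midpoint is at most gamma times the
   distance to y0, so every term is O(N^-2). *)

From Stdlib Require Import Reals Lra Lia ClassicalEpsilon.
From Coquelicot Require Import Coquelicot.
Open Scope R_scope.

(** * One-variable calculus *)

Lemma is_derive_continuity_pt (g : R -> R) t l : is_derive g t l -> continuity_pt g t.
Proof.
  intros Hg; apply derivable_continuous_pt; exists l; apply is_derive_Reals, Hg.
Qed.

Lemma MVT_le (g dg : R -> R) a b :
  a <= b -> (forall t, a <= t <= b -> is_derive g t (dg t)) ->
  exists c, a <= c <= b /\ g b - g a = dg c * (b - a).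
Proof.
  intros Hab Hd.
  destruct (MVT_gen g a b dg) as [c [Hc Hgc]];
    rewrite ?Rmin_left, ?Rmax_right in * by lra.
  - intros t Ht; apply Hd; lra.
  - intros t Ht; apply (is_derive_continuity_pt g t (dg t)), Hd; lra.
  - exists c; split; assumption.
Qed.

Lemma increment_between (g dg : R -> R) lo hi a b :
  a <= b -> (forall t, a <= t <= b -> is_derive g t (dg t)) ->
  (forall t, a <= t <= b -> lo <= dg t <= hi) ->
  lo * (b - a) <= g b - g a <= hi * (b - a).
Proof.
  intros Hab Hd Hb.
  destruct (MVT_le g dg a b Hab Hd) as [c [Hc ->]].
  destruct (Hb c Hc); split; apply Rmult_le_compat_r; lra.
Qed.

Lemma abs_increment_le (g dg : R -> R) M a b :
  a <= b -> (forall t, a <= t <= b -> is_derive g t (dg t)) ->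
  (forall t, a <= t <= b -> Rabs (dg t) <= M) ->
  Rabs (g b - g a) <= M * (b - a).
Proof.
  intros Hab Hd HM.
  assert (H := increment_between g dg (- M) M a b Hab Hd).
  apply Rabs_le_between; replace (- (M * (b - a))) with (- M * (b - a)) by ring.
  apply H; intros t Ht; apply Rabs_le_between, HM, Ht.
Qed.

Lemma exp_le_compat a b : a <= b -> exp a <= exp b.
Proof.
  intros [Hlt | ->]; [apply Rlt_le, exp_increasing, Hlt | apply Rle_refl].
Qed.

Lemma pos_right_of_critical_point (dg : R -> R) x l :
  is_derive dg x l -> dg x = 0 -> 0 < l ->
  exists d, 0 < d /\ forall s, x < s <= x + d -> 0 < dg s.
Proof.
  intros Hd H0 Hl.
  apply is_derive_Reals in Hd.
  destruct (Hd l Hl) as [[del Hdel] Hq].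
  exists (del / 2); split; [lra|].
  intros s Hs.
  assert (Hquot := Hq (s - x) ltac:(lra) ltac:(rewrite Rabs_pos_eq; simpl; lra)).
  replace (x + (s - x)) with s in Hquot by ring.
  rewrite H0, Rminus_0_r in Hquot.
  apply Rabs_def2 in Hquot.
  assert (Hpos : 0 < dg s / (s - x)) by lra.
  replace (dg s) with (dg s / (s - x) * (s - x)) by (field; lra).
  apply Rmult_lt_0_compat; lra.
Qed.

Lemma max_principle (g dg ddg : R -> R) :
  (forall t, 0 <= t <= 1 -> continuity_pt g t) ->
  (forall t, 0 < t < 1 -> is_derive g t (dg t) /\ is_derive dg t (ddg t)) ->
  g 0 <= 0 -> g 1 <= 0 ->
  (forall t, 0 < t < 1 -> 0 < g t -> 0 < ddg t) ->
  forall t, 0 <= t <= 1 -> g t <= 0.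
Proof.
  intros Hc Hd H0 H1 Hconvex t Ht.
  apply Rnot_lt_le; intros Hgt.
  destruct (continuity_ab_maj g 0 1 ltac:(lra) Hc) as [xs [Hmax Hxs]].
  assert (Hgxs := Hmax t Ht).
  assert (Hxs' : 0 < xs < 1) by (split; apply Rnot_le_lt; intros Hle;
    [replace xs with 0 in * by lra | replace xs with 1 in * by lra]; lra).
  destruct (Hd xs Hxs') as [Hg' Hdg'].
  assert (Hcrit : dg xs = 0).
  { assert (Hder : derivable_pt_lim g xs (dg xs)) by (apply is_derive_Reals, Hg').
    rewrite <- (derive_pt_eq_0 g xs (dg xs) (exist _ _ Hder) Hder).
    apply (deriv_maximum g 0 1 xs); try lra.
    intros s Hs0 Hs1; apply Hmax; lra. }
  destruct (pos_right_of_critical_point dg xs (ddg xs) Hdg' Hcrit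
              (Hconvex xs Hxs' ltac:(lra))) as [d [Hd0 Hpos]].
  set (e := Rmin d ((1 - xs) / 2)).
  assert (He : 0 < e <= d /\ xs + e < 1)
    by (unfold e; split; [split|]; [apply Rmin_case| apply Rmin_l|
        pose proof (Rmin_r d ((1 - xs) / 2))]; lra).
  destruct (MVT_cor2 g dg xs (xs + e)) as [c [Hinc Hc']]; [lra| |].
  - intros s Hs; apply is_derive_Reals, Hd; lra.
  - assert (0 < dg c) by (apply Hpos; lra).
    assert (g (xs + e) <= g xs) by (apply Hmax; lra).
    nra.
Qed.

Lemma second_difference_le (g dg ddg : R -> R) a h K :
  0 <= h ->
  (forall t, a - h <= t <= a + h ->
     is_derive g t (dg t) /\ is_derive dg t (ddg t) /\ Rabs (ddg t) <= K) ->
  Rabs (g (a + h) - 2 * g a + g (a - h)) <= 2 * K * h ^ 2.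
Proof.
  intros Hh Hd.
  assert (Hslope : forall s, 0 <= s <= h -> Rabs (dg (a + s) - dg (a - s)) <= 2 * K * h).
  { intros s Hs.
    assert (HK : 0 <= K) by (destruct (Hd a ltac:(lra)) as [_ [_ HK]];
                             pose proof (Rabs_pos (ddg a)); lra).
    apply Rle_trans with (K * (a + s - (a - s))); [|nra].
    apply (abs_increment_le dg ddg); [lra| |]; intros t Ht; apply Hd; lra. }
  assert (Hsym : forall s, 0 <= s <= h ->
            is_derive (fun s => g (a + s) + g (a - s)) s (dg (a + s) - dg (a - s))).
  { intros s Hs.
    destruct (Hd (a + s) ltac:(lra)) as [Hp _]; destruct (Hd (a - s) ltac:(lra)) as [Hm _].
    apply is_derive_Reals in Hp, Hm; apply is_derive_Reals.
    replace (dg (a + s) - dg (a - s)) with (dg (a + s) * 1 + dg (a - s) * -1) by ring.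
    apply (derivable_pt_lim_plus (fun s => g (a + s)) (fun s => g (a - s)));
      apply (derivable_pt_lim_comp _ g); auto; apply is_derive_Reals; auto_derive; auto; ring. }
  replace (g (a + h) - 2 * g a + g (a - h))
    with (g (a + h) + g (a - h) - (g (a + 0) + g (a - 0))) by (rewrite Rplus_0_r, Rminus_0_r; ring).
  replace (2 * K * h ^ 2) with (2 * K * h * (h - 0)) by ring.
  apply (abs_increment_le (fun s => g (a + s) + g (a - s)) (fun s => dg (a + s) - dg (a - s)));
    assumption.
Qed.

(** * The barrier function *)

Definition barrier (K B a t : R) : R :=
  K / a ^ 2 + B * (exp (- (a * t)) + exp (- (a * (1 - t)))).

Lemma barrier_nonneg K B a t : 0 <= K -> 0 <= B -> 0 < a -> 0 <= barrier K B a t.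
Proof.
  intros HK HB Ha; unfold barrier.
  pose proof (exp_pos (- (a * t))); pose proof (exp_pos (- (a * (1 - t)))).
  assert (0 <= K / a ^ 2) by (apply Rdiv_le_0_compat; [|apply pow_lt]; lra).
  nra.
Qed.

(* The barrier solves [barrier'' = a^2 barrier - K], so where [w] exceeds it
   the difference is strictly convex and cannot have an interior maximum. *)
Lemma barrier_upper (w dw ddw : R -> R) a K B :
  0 < a -> 0 <= K -> 0 <= B ->
  (forall t, 0 <= t <= 1 -> continuity_pt w t) ->
  (forall t, 0 < t < 1 -> is_derive w t (dw t) /\ is_derive dw t (ddw t)) ->
  w 0 <= B -> w 1 <= B ->
  (forall t, 0 < t < 1 -> 0 < w t -> a ^ 2 * w t - K <= ddw t) ->
  forall t, 0 <= t <= 1 -> w t <= barrier K B a t.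
Proof.
  intros Ha HK HB Hc Hd H0 H1 Hsuper t Ht.
  set (d1 := fun t => B * (- a * exp (- (a * t)) + a * exp (- (a * (1 - t))))).
  assert (Hd1 : forall t, is_derive (barrier K B a) t (d1 t))
    by (intros s; unfold barrier, d1; auto_derive; auto; unfold Rminus; ring).
  assert (Hd2 : forall t, is_derive d1 t (a ^ 2 * barrier K B a t - K))
    by (intros s; unfold barrier, d1; auto_derive; auto; unfold Rminus; field; lra).
  assert (HKa : 0 <= K / a ^ 2) by (apply Rdiv_le_0_compat; [|apply pow_lt]; lra).
  cut (w t - barrier K B a t <= 0); [lra|].
  apply (max_principle (fun t => w t - barrier K B a t) (fun t => dw t - d1 t)
           (fun t => ddw t - (a ^ 2 * barrier K B a t - K))); [| | | | |exact Ht].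
  - intros s Hs; apply (continuity_pt_minus w (barrier K B a)); [apply Hc, Hs|].
    apply (is_derive_continuity_pt _ _ _ (Hd1 s)).
  - intros s Hs; destruct (Hd s Hs); split; apply is_derive_Reals.
    + apply (derivable_pt_lim_minus w (barrier K B a)); apply is_derive_Reals; auto.
    + apply (derivable_pt_lim_minus dw d1); apply is_derive_Reals; auto.
  - unfold barrier; rewrite Rmult_0_r, Ropp_0, exp_0.
    pose proof (exp_pos (- (a * (1 - 0)))); nra.
  - unfold barrier; rewrite Rminus_diag, Rmult_0_r, Ropp_0, exp_0.
    pose proof (exp_pos (- (a * 1))); nra.
  - intros s Hs Hpos.
    pose proof (barrier_nonneg K B a s HK HB Ha).
    pose proof (Hsuper s Hs ltac:(lra)).
    assert (0 < a ^ 2 * (w s - barrier K B a s)) by (apply Rmult_lt_0_compat; [apply pow_lt|]; lra).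
    lra.
Qed.

Lemma barrier_abs (w dw ddw : R -> R) a K B :
  0 < a -> 0 <= K ->
  (forall t, 0 <= t <= 1 -> continuity_pt w t) ->
  (forall t, 0 < t < 1 -> is_derive w t (dw t) /\ is_derive dw t (ddw t)) ->
  Rabs (w 0) <= B -> Rabs (w 1) <= B ->
  (forall t, 0 < t < 1 -> 0 < w t -> a ^ 2 * w t - K <= ddw t) ->
  (forall t, 0 < t < 1 -> w t < 0 -> ddw t <= a ^ 2 * w t + K) ->
  forall t, 0 <= t <= 1 -> Rabs (w t) <= barrier K B a t.
Proof.
  intros Ha HK Hc Hd H0 H1 Hsuper Hsub t Ht.
  assert (HB : 0 <= B) by (pose proof (Rabs_pos (w 0)); lra).
  apply Rabs_le_between in H0, H1.
  apply Rabs_le_between; split.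
  - cut (- w t <= barrier K B a t); [lra|].
    apply (barrier_upper (fun t => - w t) (fun t => - dw t) (fun t => - ddw t)); auto; try lra.
    + intros s Hs; apply (continuity_pt_opp w), Hc, Hs.
    + intros s Hs; destruct (Hd s Hs); split; apply is_derive_Reals;
        apply derivable_pt_lim_opp, is_derive_Reals; assumption.
    + intros s Hs Hpos; pose proof (Hsub s Hs ltac:(lra)); lra.
  - apply (barrier_upper w dw ddw); auto; lra.
Qed.

Lemma barrier_layer_le K B a lam N t :
  0 < a -> 0 <= B -> 0 < N -> a * lam = 2 * ln N -> lam <= t <= 1 - lam ->
  barrier K B a t <= K / a ^ 2 + 2 * B / N ^ 2.
Proof.
  intros Ha HB HN Hlam Ht.
  assert (Hdecay : exp (- (a * lam)) = / N ^ 2).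
  { rewrite Hlam, exp_Ropp; f_equal.
    replace (2 * ln N) with (ln N + ln N) by ring.
    rewrite exp_plus, exp_ln by lra; ring. }
  assert (exp (- (a * t)) <= / N ^ 2)
    by (rewrite <- Hdecay; apply exp_le_compat; nra).
  assert (exp (- (a * (1 - t))) <= / N ^ 2)
    by (rewrite <- Hdecay; apply exp_le_compat; nra).
  unfold barrier, Rdiv; nra.
Qed.

Lemma sqrt_div_pow2 m eps : 0 <= m -> eps <> 0 -> (sqrt m / eps) ^ 2 = m / eps ^ 2.
Proof.
  intros Hm Heps; unfold Rdiv; rewrite Rpow_mult_distr, pow2_sqrt, pow_inv by assumption.
  reflexivity.
Qed.

(** * Functions of two variables *)

Definition continuous2 (g : R -> R -> R) : Prop :=
  forall p, continuous (fun q : R * R => g (fst q) (snd q)) p.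

Lemma Ck_pred k f : Ck (S k) f -> Ck k f.
Proof.
  revert f; induction k as [|k IH]; intros f Hf.
  - exact (proj1 Hf).
  - destruct Hf as [Hc [fx [fy [Hx [Hy [Hfx Hfy]]]]]].
    split; [exact Hc|]; exists fx, fy; auto.
Qed.

Lemma Ck_le j k f : (j <= k)%nat -> Ck k f -> Ck j f.
Proof. induction 1; auto using Ck_pred. Qed.

Lemma continuous_eps_delta (g : R -> R -> R) a u :
  continuous (fun q : R * R => g (fst q) (snd q)) (a, u) ->
  forall e, 0 < e -> exists d, 0 < d /\ forall a' u',
    Rabs (a' - a) < d -> Rabs (u' - u) < d -> Rabs (g a' u' - g a u) < e.
Proof.
  intros Hg e He.
  destruct (proj2 (continuity_2d_pt_filterlim g a u) Hg (mkposreal e He)) as [d Hd].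
  exists d; split; [apply cond_pos | exact Hd].
Qed.

Lemma differentiable_pt_lim_of_partials (g gx gy : R -> R -> R) x y :
  (forall x y, is_derive (fun t => g t y) x (gx x y)) ->
  (forall x y, is_derive (fun t => g x t) y (gy x y)) ->
  continuous2 gx ->
  differentiable_pt_lim g x y (gx x y) (gy x y).
Proof.
  intros Hx Hy Hc.
  apply filterdiff_differentiable_pt_lim, (is_derive_filterdiff g x y gx (gy x y)); auto.
  apply filter_forall; intros; apply Hx.
Qed.

Lemma is_derive_comp_2d (g : R -> R -> R) u v t du dv a b :
  is_derive u t du -> is_derive v t dv -> differentiable_pt_lim g (u t) (v t) a b ->
  is_derive (fun s => g (u s) (v s)) t (a * du + b * dv).
Proof.
  intros Hu Hv Hg; apply is_derive_Reals.
  apply derivable_pt_lim_comp_2d; auto; apply is_derive_Reals; auto.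
Qed.

(* If [f (x + h, y + k) = f (x, y)] and [f] is differentiable at [(x, y)] with
   partial derivatives [a] and [b >= m], then [k / h] is close to [- a / b]. *)
Lemma implicit_quotient_le a b h k eta m :
  0 < m <= b -> 0 < eta <= m / 2 -> h <> 0 ->
  Rabs (a * h + b * k) <= eta * Rmax (Rabs h) (Rabs k) ->
  Rabs (k / h + a / b) <= 2 * eta * (Rabs a + m) / m ^ 2.
Proof.
  intros Hb Heta Hh Hlin.
  assert (Hh0 : 0 < Rabs h) by (apply Rabs_pos_lt, Hh).
  pose proof (Rabs_pos k); pose proof (Rabs_pos a).
  assert (Hlin' : Rabs (a * h + b * k) <= eta * (Rabs h + Rabs k))
    by (eapply Rle_trans; [exact Hlin|]; apply Rmult_le_compat_l; [lra|];
        apply Rmax_case; lra).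
  assert (Hk : m * (Rabs h + Rabs k) <= 2 * (Rabs a + m) * Rabs h).
  { assert (Htri : Rabs (b * k) <= Rabs (a * h + b * k) + Rabs (a * h)).
    { replace (b * k) with ((a * h + b * k) + - (a * h)) at 1 by ring.
      eapply Rle_trans; [apply Rabs_triang|]; rewrite Rabs_Ropp; lra. }
    rewrite !Rabs_mult, (Rabs_pos_eq b) in Htri by lra.
    nra. }
  replace (k / h + a / b) with ((a * h + b * k) / (b * h)) by (field; lra).
  rewrite Rabs_div, Rabs_mult, (Rabs_pos_eq b) by (try apply Rmult_integral_contrapositive; lra).
  apply Rle_div_l; [nra|].
  apply Rle_trans with (eta * (Rabs h + Rabs k)); [exact Hlin'|].
  unfold Rdiv; apply Rmult_le_reg_l with (m ^ 2); [nra|].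
  replace (m ^ 2 * (2 * eta * (Rabs a + m) * / m ^ 2 * (b * Rabs h)))
    with (eta * b * (2 * (Rabs a + m) * Rabs h)) by (field; lra).
  replace (m ^ 2 * (eta * (Rabs h + Rabs k))) with (eta * m * (m * (Rabs h + Rabs k))) by ring.
  apply Rle_trans with (eta * m * (2 * (Rabs a + m) * Rabs h)).
  - apply Rmult_le_compat_l; [nra | exact Hk].
  - apply Rmult_le_compat_r; nra.
Qed.

Definition clamp01 (x : R) : R := Rmax 0 (Rmin x 1).

Lemma clamp01_in x : 0 <= clamp01 x <= 1.
Proof. unfold clamp01, Rmax, Rmin; repeat destruct Rle_dec; lra. Qed.

Lemma clamp01_id x : 0 <= x <= 1 -> clamp01 x = x.
Proof. intros; unfold clamp01, Rmax, Rmin; repeat destruct Rle_dec; lra. Qed.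

Lemma clamp01_dist_le x x' : Rabs (clamp01 x' - clamp01 x) <= Rabs (x' - x).
Proof.
  unfold clamp01, Rmax, Rmin; repeat destruct Rle_dec; unfold Rabs;
    repeat destruct Rcase_abs; lra.
Qed.

Lemma clamp01_continuity_pt x : continuity_pt clamp01 x.
Proof.
  intros e He; exists e; split; [exact He|].
  intros x' [_ Hx']; simpl in *; unfold R_dist in *.
  pose proof (clamp01_dist_le x x'); lra.
Qed.

Lemma bounded_on_01 (h : R -> R) :
  (forall t, continuity_pt (fun s => h (clamp01 s)) t) ->
  exists K, 0 <= K /\ forall x, 0 <= x <= 1 -> Rabs (h x) <= K.
Proof.
  intros Hc.
  destruct (continuity_ab_maj (fun s => Rabs (h (clamp01 s))) 0 1) as [M [HM _]]; [lra| |].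
  - intros t _; apply (continuity_pt_comp (fun s => h (clamp01 s)) Rabs), Rcontinuity_abs; auto.
  - exists (Rabs (h (clamp01 M))); split; [apply Rabs_pos|].
    intros x Hx; rewrite <- (clamp01_id x Hx); apply HM, Hx.
Qed.

(** * The Shishkin mesh and the scheme *)

Lemma shlambda_le eps m N : shlambda eps m N <= 1 / 4.
Proof. apply Rmin_l. Qed.

Lemma shlambda_pos eps m N : 0 < eps -> 0 < m -> (1 < N)%nat -> 0 < shlambda eps m N.
Proof.
  intros Heps Hm HN; unfold shlambda; apply Rmin_case; [lra|].
  assert (0 < ln (INR N)) by (rewrite <- ln_1; apply ln_increasing; [lra | apply lt_1_INR, HN]).
  apply Rdiv_lt_0_compat; [nra | apply sqrt_lt_R0, Hm].
Qed.

(* With [a = beta / sinh z] and [d = beta / tanh z] this is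
   [gamma (a + d) / (4 (d - a)) = gamma / 4 * coth (z / 2) ^ 2]. *)
Definition scheme_coef (gamma z : R) : R := gamma / 4 * ((exp z + 1) / (exp z - 1)) ^ 2.

Lemma Fop_uniform_step eps m gamma N f v i h :
  i <> 0%nat -> i <> N -> gamma <> 0 -> 0 < beta eps gamma -> 0 < h ->
  ell eps m N i = h -> ell eps m N (i + 1) = h ->
  Fop eps m gamma N f v i
  = scheme_coef gamma (beta eps gamma * h) * (v (i - 1)%nat - 2 * v i + v (i + 1)%nat)
    - (f ((xm eps m N (i - 1) + xm eps m N i) / 2) ((v (i - 1)%nat + v i) / 2)
       + f ((xm eps m N i + xm eps m N (i + 1)) / 2) ((v i + v (i + 1)%nat) / 2)) / 2.
Proof.
  intros Hi0 HiN Hg Hb Hh Hl0 Hl1.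
  unfold Fop, Ddd, aa, dd, scheme_coef.
  rewrite (proj2 (Nat.eqb_neq _ _) Hi0), (proj2 (Nat.eqb_neq _ _) HiN), Hl0, Hl1.
  assert (HE : 1 < exp (beta eps gamma * h))
    by (rewrite <- exp_0; apply exp_increasing, Rmult_lt_0_compat; assumption).
  set (E := exp (beta eps gamma * h)) in *.
  unfold tanh, sinh, cosh; rewrite exp_Ropp; fold E.
  assert (0 < beta eps gamma * (E - 1) ^ 2) by (apply Rmult_lt_0_compat; [|apply pow_lt]; lra).
  field; repeat split; nra.
Qed.

Lemma scheme_coef_le gamma z0 z :
  0 <= gamma -> 0 < z0 <= z -> 0 <= scheme_coef gamma z <= scheme_coef gamma z0.
Proof.
  intros Hg Hz.
  assert (H0 : 1 < exp z0) by (rewrite <- exp_0; apply exp_increasing; lra).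
  assert (H1 : exp z0 <= exp z) by (apply exp_le_compat; lra).
  assert (Hq : 1 <= (exp z + 1) / (exp z - 1) <= (exp z0 + 1) / (exp z0 - 1)).
  { replace ((exp z + 1) / (exp z - 1)) with (1 + 2 / (exp z - 1)) by (field; lra).
    replace ((exp z0 + 1) / (exp z0 - 1)) with (1 + 2 / (exp z0 - 1)) by (field; lra).
    assert (0 < 2 / (exp z - 1)) by (apply Rdiv_lt_0_compat; lra).
    assert (2 / (exp z - 1) <= 2 / (exp z0 - 1))
      by (apply Rmult_le_compat_l; [lra | apply Rinv_le_contravar; lra]).
    lra. }
  unfold scheme_coef; split.
  - apply Rmult_le_pos; [lra | apply pow_le; lra].
  - apply Rmult_le_compat_l; [lra | apply pow_incr; lra].
Qed.

Definition coarse_step (eps m : R) (N : nat) : R := 2 * (1 - 2 * shlambda eps m N) / INR N.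

Lemma coarse_step_bounds eps m N :
  (0 < N)%nat -> 0 <= shlambda eps m N -> 1 / INR N <= coarse_step eps m N <= 2 / INR N.
Proof.
  intros HN Hlam; pose proof (shlambda_le eps m N).
  assert (0 < INR N) by (apply lt_0_INR, HN).
  unfold coarse_step, Rdiv; split; apply Rmult_le_compat_r;
    try (apply Rlt_le, Rinv_0_lt_compat); lra.
Qed.

Lemma scheme_coef_coarse_le eps m gamma N C0 :
  0 < eps -> 0 < gamma -> 0 < C0 -> (0 < N)%nat -> 0 <= shlambda eps m N -> eps <= C0 / INR N ->
  0 <= scheme_coef gamma (beta eps gamma * coarse_step eps m N)
    <= scheme_coef gamma (sqrt gamma / C0).
Proof.
  intros Heps Hg HC0 HN Hlam HepsN.
  destruct (coarse_step_bounds eps m N HN Hlam) as [Hh _].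
  assert (0 < INR N) by (apply lt_0_INR, HN).
  apply scheme_coef_le; [lra | split; [apply Rdiv_lt_0_compat; [apply sqrt_lt_R0|]; lra|]].
  unfold beta, Rdiv; rewrite Rmult_assoc; apply Rmult_le_compat_l; [apply sqrt_pos|].
  replace (/ C0) with (/ eps * (eps / C0)) by (field; lra).
  apply Rmult_le_compat_l; [apply Rlt_le, Rinv_0_lt_compat; lra|].
  apply Rle_div_l; [lra|].
  apply Rle_trans with (C0 / INR N); [exact HepsN|].
  unfold Rdiv in *; rewrite Rmult_comm; apply Rmult_le_compat_r; lra.
Qed.

Section Mesh.

Variables (eps m : R) (N : nat).
Hypotheses (N_pos : (0 < N)%nat) (N_mod4 : (N mod 4 = 0)%nat).

Lemma N_quarters : (N = 4 * (N / 4) /\ N / 2 = 2 * (N / 4) /\ 3 * N / 4 = 3 * (N / 4))%nat.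
Proof.
  pose proof (Nat.div_mod N 4); pose proof (Nat.div_mod N 2); pose proof (Nat.div_mod (3 * N) 4).
  pose proof (Nat.mod_upper_bound N 2); pose proof (Nat.mod_upper_bound (3 * N) 4).
  lia.
Qed.

Lemma shmesh_fine j :
  (j <= N / 4)%nat -> shmesh eps m N j = INR j * (4 * shlambda eps m N / INR N).
Proof.
  intros Hj; unfold shmesh; destruct (Nat.leb_spec j (N / 4)); [reflexivity | lia].
Qed.

Lemma shmesh_coarse j :
  (N / 4 <= j <= 3 * N / 4)%nat ->
  shmesh eps m N j = shlambda eps m N + INR (j - N / 4) * coarse_step eps m N.
Proof.
  intros Hj; unfold shmesh, coarse_step.
  destruct (Nat.leb_spec j (N / 4)).
  - assert (j = N / 4)%nat by lia; subst j; rewrite Nat.sub_diag.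
    assert (HN : INR N = 4 * INR (N / 4))
      by (rewrite (proj1 N_quarters) at 1; rewrite mult_INR; simpl; ring).
    assert (0 < INR (N / 4)) by (apply lt_0_INR; pose proof N_quarters; lia).
    rewrite HN; change (INR 0) with 0; field; lra.
  - destruct (Nat.leb_spec j (3 * N / 4)); [reflexivity | lia].
Qed.

Lemma xm_quarter : xm eps m N (N / 4) = shlambda eps m N.
Proof.
  unfold xm; rewrite shmesh_coarse, Nat.sub_diag by (pose proof N_quarters; lia).
  simpl; ring.
Qed.

Lemma xm_coarse_succ j :
  (N / 4 < j <= 3 * N / 4)%nat -> xm eps m N j = xm eps m N (j - 1) + coarse_step eps m N.
Proof.
  intros Hj; unfold xm.
  rewrite !shmesh_coarse by lia.
  replace (j - N / 4)%nat with (S (j - 1 - N / 4)) by lia.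
  rewrite S_INR; ring.
Qed.

Lemma coarse_index i :
  0 < shlambda eps m N -> (N / 4 <= i)%nat -> xm eps m N (N / 4) <= xm eps m N (i - 1) ->
  (N / 4 < i)%nat.
Proof.
  intros Hlam Hi Hx.
  destruct (Nat.eq_dec i (N / 4)) as [-> | ]; [exfalso | lia].
  unfold xm in Hx; rewrite !shmesh_fine in Hx by lia.
  assert (0 < 4 * shlambda eps m N / INR N)
    by (apply Rdiv_lt_0_compat; [lra | apply lt_0_INR; lia]).
  assert (INR (N / 4 - 1) < INR (N / 4)) by (apply lt_INR; pose proof N_quarters; lia).
  nra.
Qed.

Lemma Fop_coarse gamma f v i :
  0 < eps -> 0 < gamma -> 0 <= shlambda eps m N -> (N / 4 < i <= N / 2 - 1)%nat ->
  Fop eps m gamma N f v i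
  = scheme_coef gamma (beta eps gamma * coarse_step eps m N)
      * (v (i - 1)%nat - 2 * v i + v (i + 1)%nat)
    - (f ((xm eps m N (i - 1) + xm eps m N i) / 2) ((v (i - 1)%nat + v i) / 2)
       + f ((xm eps m N i + xm eps m N (i + 1)) / 2) ((v i + v (i + 1)%nat) / 2)) / 2.
Proof.
  intros Heps Hg Hlam Hi; pose proof N_quarters.
  destruct (coarse_step_bounds eps m N N_pos Hlam) as [Hh _].
  assert (0 < 1 / INR N) by (apply Rdiv_lt_0_compat; [lra | apply lt_0_INR, N_pos]).
  apply Fop_uniform_step; try lia; try lra.
  - apply Rdiv_lt_0_compat; [apply sqrt_lt_R0|]; lra.
  - unfold ell; rewrite xm_coarse_succ by lia; ring.
  - unfold ell; rewrite (xm_coarse_succ (i + 1)) by lia.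
    replace (i + 1 - 1)%nat with i by lia; ring.
Qed.

End Mesh.

(** * The reduced solution *)

Section ReducedSolution.

Variables (f fx fy fxx fxy fyx fyy : R -> R -> R) (m gamma : R).

Hypothesis m_pos : 0 < m.
Hypothesis fy_bounds : forall x u, 0 <= x <= 1 -> m <= fy x u <= gamma.
Hypothesis f_dx : forall x u, is_derive (fun t => f t u) x (fx x u).
Hypothesis f_du : forall x u, is_derive (fun t => f x t) u (fy x u).
Hypothesis fx_dx : forall x u, is_derive (fun t => fx t u) x (fxx x u).
Hypothesis fx_du : forall x u, is_derive (fun t => fx x t) u (fxy x u).
Hypothesis fy_dx : forall x u, is_derive (fun t => fy t u) x (fyx x u).
Hypothesis fy_du : forall x u, is_derive (fun t => fy x t) u (fyy x u).
Hypotheses (f_cont : continuous2 f) (fx_cont : continuous2 fx) (fy_cont : continuous2 fy).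
Hypotheses (fxx_cont : continuous2 fxx) (fxy_cont : continuous2 fxy).
Hypotheses (fyx_cont : continuous2 fyx) (fyy_cont : continuous2 fyy).

Lemma f_increment_between x u v :
  0 <= x <= 1 -> v <= u -> m * (u - v) <= f x u - f x v <= gamma * (u - v).
Proof.
  intros Hx Huv.
  apply (increment_between (fun t => f x t) (fun t => fy x t)); auto.
Qed.

Lemma f_abs_increment_between x u v :
  0 <= x <= 1 -> m * Rabs (u - v) <= Rabs (f x u - f x v) <= gamma * Rabs (u - v).
Proof.
  intros Hx; destruct (Rle_or_lt v u) as [Huv | Huv].
  - destruct (f_increment_between x u v Hx Huv).
    rewrite !Rabs_pos_eq; nra.
  - destruct (f_increment_between x v u Hx ltac:(lra)).
    rewrite !Rabs_left1; nra.
Qed.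

Lemma f_root_exists x : 0 <= x <= 1 -> exists u, f x u = 0.
Proof.
  intros Hx.
  set (U := Rabs (f x 0) / m + 1).
  assert (HU : m * U = Rabs (f x 0) + m) by (unfold U; field; lra).
  assert (0 < U) by (unfold U; pose proof (Rabs_pos (f x 0));
                     assert (0 <= Rabs (f x 0) / m) by (apply Rdiv_le_0_compat; lra); lra).
  destruct (f_increment_between x U 0 Hx ltac:(lra)).
  destruct (f_increment_between x 0 (- U) Hx ltac:(lra)).
  pose proof (Rle_abs (f x 0)); pose proof (Rle_abs (- f x 0)); rewrite Rabs_Ropp in *.
  destruct (IVT (fun t => f x t) (- U) U) as [u [_ Hu]]; [| lra | nra | nra |].
  - intros t; apply (is_derive_continuity_pt _ t (fy x t)), f_du.
  - exists u; exact Hu.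
Qed.

(* The reduced solution, [f x (y0 x) = 0].  Clamping [x] to [0, 1] makes
   [y0] continuous on all of [R], as needed for two-sided continuity at the
   end points. *)
Definition y0 (x : R) : R := epsilon (inhabits 0) (fun u => f (clamp01 x) u = 0).

Lemma y0_root x : f (clamp01 x) (y0 x) = 0.
Proof. unfold y0; apply epsilon_spec, f_root_exists, clamp01_in. Qed.

Lemma y0_root_in x : 0 <= x <= 1 -> f x (y0 x) = 0.
Proof. intros Hx; rewrite <- (clamp01_id x Hx) at 1; apply y0_root. Qed.

Lemma abs_f_le_dist_y0 x u : 0 <= x <= 1 -> Rabs (f x u) <= gamma * Rabs (u - y0 x).
Proof.
  intros Hx.
  destruct (f_abs_increment_between x u (y0 x) Hx) as [_ H].
  rewrite y0_root_in, Rminus_0_r in H by exact Hx; exact H.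
Qed.

Lemma y0_dist_le x x' :
  m * Rabs (y0 x' - y0 x) <= Rabs (f (clamp01 x') (y0 x) - f (clamp01 x) (y0 x)).
Proof.
  destruct (f_abs_increment_between (clamp01 x') (y0 x') (y0 x) (clamp01_in x')) as [H _].
  rewrite y0_root, Rminus_0_l, Rabs_Ropp in H.
  rewrite y0_root, Rminus_0_r; exact H.
Qed.

Lemma y0_continuity_pt x : continuity_pt y0 x.
Proof.
  intros e He.
  destruct (continuous_eps_delta f (clamp01 x) (y0 x) (f_cont _) (e * m) ltac:(nra))
    as [d [Hd Hfd]].
  exists d; split; [exact Hd|].
  intros x' [_ Hx']; simpl in *; unfold R_dist in *.
  pose proof (y0_dist_le x x'); pose proof (clamp01_dist_le x x').
  assert (Rabs (f (clamp01 x') (y0 x) - f (clamp01 x) (y0 x)) < e * m)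
    by (apply Hfd; [lra | rewrite Rminus_diag, Rabs_R0; lra]).
  nra.
Qed.

Definition y0_d1 (t : R) : R := - fx t (y0 t) / fy t (y0 t).

Lemma y0_is_derive x : 0 < x < 1 -> is_derive y0 x (y0_d1 x).
Proof.
  intros Hx; apply is_derive_Reals; intros e He.
  set (Y := y0 x); set (a := fx x Y); set (b := fy x Y).
  assert (Hb : m <= b) by (apply fy_bounds; lra).
  pose proof (Rabs_pos a).
  set (eta := Rmin (m / 2) (e * m ^ 2 / (4 * (Rabs a + m)))).
  assert (Heta : 0 < eta <= m / 2).
  { assert (0 < e * m ^ 2 / (4 * (Rabs a + m)))
      by (apply Rdiv_lt_0_compat; [apply Rmult_lt_0_compat; [|apply pow_lt]|]; lra).
    unfold eta; split; [apply Rmin_case | apply Rmin_l]; lra. }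
  assert (Heta' : eta <= e * m ^ 2 / (4 * (Rabs a + m))) by apply Rmin_r.
  destruct (differentiable_pt_lim_of_partials f fx fy x Y f_dx f_du fx_cont
              (mkposreal eta (proj1 Heta))) as [d1 Hlin]; simpl in Hlin.
  destruct (y0_continuity_pt x d1 (cond_pos d1)) as [d2 [Hd2 Hy0]].
  assert (Hd : 0 < Rmin (Rmin d1 d2) (Rmin x (1 - x)))
    by (repeat apply Rmin_case; try lra; apply cond_pos).
  exists (mkposreal _ Hd); intros h Hh0 Hh; simpl in Hh.
  destruct (proj1 (Rmin_Rgt _ _ _) Hh) as [Hd12 Hdx].
  destruct (proj1 (Rmin_Rgt _ _ _) Hd12) as [Hhd1 Hhd2].
  destruct (proj1 (Rmin_Rgt _ _ _) Hdx) as [Hx0 Hx1].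
  assert (Hxh : 0 < x + h < 1) by (apply Rabs_def2 in Hx0, Hx1; lra).
  assert (HY : Rabs (y0 (x + h) - Y) < d1).
  { apply (Hy0 (x + h)); split; [split; [exact I | lra]|]; simpl; unfold R_dist.
    replace (x + h - x) with h by ring; exact Hhd2. }
  specialize (Hlin (x + h) (y0 (x + h)) ltac:(replace (x + h - x) with h by ring; exact Hhd1) HY).
  assert (HY0 : f x Y = 0) by (apply y0_root_in; lra).
  rewrite (y0_root_in (x + h)), HY0 in Hlin by lra.
  fold a b in Hlin; replace (x + h - x) with h in Hlin by ring.
  replace (0 - 0 - (a * h + b * (y0 (x + h) - Y)))
    with (- (a * h + b * (y0 (x + h) - Y))) in Hlin by ring.
  rewrite Rabs_Ropp in Hlin.
  pose proof (implicit_quotient_le a b h (y0 (x + h) - Y) eta m ltac:(lra) Heta Hh0 Hlin).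
  unfold y0_d1; fold Y a b.
  replace ((y0 (x + h) - Y) / h - - a / b) with ((y0 (x + h) - Y) / h + a / b) by (field; lra).
  eapply Rle_lt_trans; [eassumption|].
  apply Rle_lt_trans with (e / 2); [|lra].
  apply Rle_trans with (2 * (e * m ^ 2 / (4 * (Rabs a + m))) * (Rabs a + m) / m ^ 2).
  - unfold Rdiv; repeat apply Rmult_le_compat_r; try apply Rlt_le, Rinv_0_lt_compat; nra.
  - right; field; lra.
Qed.

Definition y0_d2 (t : R) : R :=
  - ((fxx t (y0 t) + fxy t (y0 t) * y0_d1 t) * fy t (y0 t)
     - fx t (y0 t) * (fyx t (y0 t) + fyy t (y0 t) * y0_d1 t)) / fy t (y0 t) ^ 2.

Lemma y0_d1_is_derive x : 0 < x < 1 -> is_derive y0_d1 x (y0_d2 x).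
Proof.
  intros Hx.
  assert (Hy0 := y0_is_derive x Hx).
  assert (Hnum := is_derive_comp_2d fx (fun s => s) y0 x 1 _ _ _ (is_derive_id x) Hy0
                    (differentiable_pt_lim_of_partials fx fxx fxy x (y0 x) fx_dx fx_du fxx_cont)).
  assert (Hden := is_derive_comp_2d fy (fun s => s) y0 x 1 _ _ _ (is_derive_id x) Hy0
                    (differentiable_pt_lim_of_partials fy fyx fyy x (y0 x) fy_dx fy_du fyx_cont)).
  assert (Hne : fy x (y0 x) <> 0) by (pose proof (fy_bounds x (y0 x) ltac:(lra)); lra).
  assert (Hq := is_derive_div _ _ x _ _ (is_derive_opp _ x _ Hnum) Hden Hne).
  match type of Hq with is_derive _ _ ?l => replace (y0_d2 x) with l end.
  - exact Hq.
  - unfold y0_d2, y0_d1, opp; simpl; field; exact Hne.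
Qed.

Lemma along_y0_continuity_pt (g : R -> R -> R) t :
  continuous2 g -> continuity_pt (fun s => g (clamp01 s) (y0 (clamp01 s))) t.
Proof.
  intros Hg; apply continuity_pt_filterlim.
  apply (continuous_comp_2 clamp01 (fun s => y0 (clamp01 s)) g); [| |apply Hg];
    apply continuity_pt_filterlim.
  - apply clamp01_continuity_pt.
  - apply (continuity_pt_comp clamp01 y0); [apply clamp01_continuity_pt | apply y0_continuity_pt].
Qed.

Lemma y0_d2_bounded : exists K, 0 <= K /\ forall x, 0 <= x <= 1 -> Rabs (y0_d2 x) <= K.
Proof.
  apply bounded_on_01; intros t.
  assert (Hne : fy (clamp01 t) (y0 (clamp01 t)) <> 0)
    by (pose proof (fy_bounds (clamp01 t) (y0 (clamp01 t)) (clamp01_in t)); lra).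
  unfold y0_d2, y0_d1.
  repeat first
    [ apply along_y0_continuity_pt; assumption
    | apply continuity_pt_opp | apply continuity_pt_minus | apply continuity_pt_plus
    | apply continuity_pt_div | apply continuity_pt_mult
    | apply continuity_pt_const; intros ? ?; reflexivity ];
    try apply pow_nonzero; exact Hne.
Qed.

Lemma solution_near_y0 eps K y dy :
  0 < eps -> 0 <= K -> (forall x, 0 <= x <= 1 -> Rabs (y0_d2 x) <= K) ->
  (forall x, 0 <= x <= 1 -> continuity_pt y x) ->
  (forall x, 0 < x < 1 -> is_derive y x (dy x) /\ is_derive dy x (f x (y x) / eps ^ 2)) ->
  y 0 = 0 -> y 1 = 0 ->
  forall t, 0 <= t <= 1 ->
  Rabs (y t - y0 t) <= barrier K (Rmax (Rabs (y0 0)) (Rabs (y0 1))) (sqrt m / eps) t.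
Proof.
  intros Heps HK0 HK Hyc Hyd Hy0 Hy1.
  assert (Ha : 0 < sqrt m / eps) by (apply Rdiv_lt_0_compat; [apply sqrt_lt_R0|]; lra).
  assert (Heps2 : 0 < / eps ^ 2) by (apply Rinv_0_lt_compat, pow_lt, Heps).
  apply (barrier_abs (fun t => y t - y0 t) (fun t => dy t - y0_d1 t)
           (fun t => f t (y t) / eps ^ 2 - y0_d2 t)); auto.
  - intros t Ht; apply (continuity_pt_minus y y0); [apply Hyc, Ht | apply y0_continuity_pt].
  - intros t Ht; destruct (Hyd t Ht); split; apply is_derive_Reals.
    + apply (derivable_pt_lim_minus y y0); apply is_derive_Reals; [|apply y0_is_derive]; auto.
    + apply (derivable_pt_lim_minus dy y0_d1); apply is_derive_Reals;
        [|apply y0_d1_is_derive]; auto.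
  - rewrite Hy0, Rminus_0_l, Rabs_Ropp; apply Rmax_l.
  - rewrite Hy1, Rminus_0_l, Rabs_Ropp; apply Rmax_r.
  - intros t Ht Hpos; rewrite sqrt_div_pow2 by lra.
    destruct (f_increment_between t (y t) (y0 t) ltac:(lra) ltac:(lra)) as [Hf _].
    rewrite y0_root_in, Rminus_0_r in Hf by lra.
    pose proof (proj1 (Rabs_le_between _ _) (HK t ltac:(lra))).
    unfold Rdiv; nra.
  - intros t Ht Hneg; rewrite sqrt_div_pow2 by lra.
    destruct (f_increment_between t (y0 t) (y t) ltac:(lra) ltac:(lra)) as [Hf _].
    rewrite y0_root_in, Rminus_0_l in Hf by lra.
    pose proof (proj1 (Rabs_le_between _ _) (HK t ltac:(lra))).
    unfold Rdiv; nra.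
Qed.

Definition outer_const (K C0 : R) : R := K * C0 ^ 2 / m + 2 * Rmax (Rabs (y0 0)) (Rabs (y0 1)).

Lemma outer_const_nonneg K C0 : 0 <= K -> 0 <= outer_const K C0.
Proof.
  intros HK; unfold outer_const.
  pose proof (Rmax_l (Rabs (y0 0)) (Rabs (y0 1))); pose proof (Rabs_pos (y0 0)).
  assert (0 <= K * C0 ^ 2 / m)
    by (apply Rdiv_le_0_compat; [apply Rmult_le_pos; [|apply pow2_ge_0]|]; lra).
  lra.
Qed.

Lemma solution_near_y0_outside_layers eps K y dy N C0 t :
  0 < eps -> 0 <= K -> (forall x, 0 <= x <= 1 -> Rabs (y0_d2 x) <= K) ->
  (forall x, 0 <= x <= 1 -> continuity_pt y x) ->
  (forall x, 0 < x < 1 -> is_derive y x (dy x) /\ is_derive dy x (f x (y x) / eps ^ 2)) ->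
  y 0 = 0 -> y 1 = 0 ->
  (0 < N)%nat -> shlambda eps m N = 2 * eps * ln (INR N) / sqrt m -> eps <= C0 / INR N ->
  shlambda eps m N <= t <= 1 / 2 ->
  Rabs (y t - y0 t) <= outer_const K C0 / INR N ^ 2.
Proof.
  intros Heps HK0 HK Hyc Hyd Hy0 Hy1 HN Hlam HepsN Ht.
  assert (HN1 : 1 <= INR N) by (apply (le_INR 1); lia).
  set (B := Rmax (Rabs (y0 0)) (Rabs (y0 1))).
  assert (HB : 0 <= B)
    by (unfold B; pose proof (Rabs_pos (y0 0)); pose proof (Rmax_l (Rabs (y0 0)) (Rabs (y0 1)));
        lra).
  pose proof (shlambda_le eps m N).
  assert (Hsm : 0 < sqrt m) by (apply sqrt_lt_R0, m_pos).
  assert (Hlam0 : 0 <= shlambda eps m N).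
  { rewrite Hlam; apply Rdiv_le_0_compat; [|lra].
    assert (0 <= ln (INR N)) by (rewrite <- ln_1; apply ln_le; lra). nra. }
  eapply Rle_trans; [apply (solution_near_y0 eps K y dy); auto; lra|].
  eapply Rle_trans; [apply (barrier_layer_le K B (sqrt m / eps) (shlambda eps m N) (INR N) t);
                     try apply Rdiv_lt_0_compat; try lra; rewrite Hlam; field; lra|].
  assert (Heps2 : eps ^ 2 <= C0 ^ 2 / INR N ^ 2)
    by (unfold Rdiv; rewrite <- pow_inv, <- Rpow_mult_distr; apply pow_incr; lra).
  rewrite sqrt_div_pow2 by lra; unfold outer_const, Rdiv in *.
  replace (K * / (m * / eps ^ 2)) with (K * / m * eps ^ 2) by (field; split; lra).
  assert (0 <= K * / m) by (apply Rmult_le_pos; [lra | apply Rlt_le, Rinv_0_lt_compat, m_pos]).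
  fold B; nra.
Qed.

Lemma y0_second_difference_le K a b c s :
  (forall x, 0 <= x <= 1 -> Rabs (y0_d2 x) <= K) ->
  0 <= s -> b = a + s -> c = b + s -> 0 < a -> c < 1 ->
  Rabs (y0 a - 2 * y0 b + y0 c) <= 2 * K * s ^ 2.
Proof.
  intros HK Hs -> -> Ha Hc.
  replace (y0 a) with (y0 (a + s - s)) by (f_equal; ring).
  replace (y0 (a + s - s) - 2 * y0 (a + s) + y0 (a + s + s))
    with (y0 (a + s + s) - 2 * y0 (a + s) + y0 (a + s - s)) by ring.
  apply (second_difference_le y0 y0_d1 y0_d2); [exact Hs|].
  intros t Ht; split; [|split]; [apply y0_is_derive | apply y0_d1_is_derive | apply HK]; lra.
Qed.

Lemma coarse_residual_le y c h delta K X0 X1 X2 :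
  0 <= c -> 0 <= h -> X1 = X0 + h -> X2 = X1 + h -> 0 < X0 -> X2 < 1 ->
  (forall x, 0 <= x <= 1 -> Rabs (y0_d2 x) <= K) ->
  Rabs (y X0 - y0 X0) <= delta -> Rabs (y X1 - y0 X1) <= delta -> Rabs (y X2 - y0 X2) <= delta ->
  Rabs (c * (y X0 - 2 * y X1 + y X2)
        - (f ((X0 + X1) / 2) ((y X0 + y X1) / 2) + f ((X1 + X2) / 2) ((y X1 + y X2) / 2)) / 2)
  <= c * (2 * K * h ^ 2 + 4 * delta) + gamma * (K * h ^ 2 / 4 + delta).
Proof.
  intros Hc Hh HX1 HX2 HX0 HX2' HK H0 H1 H2.
  assert (Hgamma : 0 <= gamma) by (pose proof (fy_bounds 0 0 ltac:(lra)); lra).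
  assert (Hy0 := y0_second_difference_le K X0 X1 X2 h HK Hh HX1 HX2 HX0 HX2').
  assert (Hm1 := y0_second_difference_le K X0 ((X0 + X1) / 2) X1 (h / 2) HK
                   ltac:(lra) ltac:(lra) ltac:(lra) HX0 ltac:(lra)).
  assert (Hm2 := y0_second_difference_le K X1 ((X1 + X2) / 2) X2 (h / 2) HK
                   ltac:(lra) ltac:(lra) ltac:(lra) ltac:(lra) HX2').
  apply Rabs_le_between in Hy0, Hm1, Hm2, H0, H1, H2.
  assert (HD : Rabs (c * (y X0 - 2 * y X1 + y X2)) <= c * (2 * K * h ^ 2 + 4 * delta)).
  { rewrite Rabs_mult, (Rabs_pos_eq c) by exact Hc.
    apply Rmult_le_compat_l; [exact Hc|]; apply Rabs_le_between; lra. }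
  assert (HF1 : Rabs (f ((X0 + X1) / 2) ((y X0 + y X1) / 2)) <= gamma * (K * h ^ 2 / 4 + delta)).
  { eapply Rle_trans; [apply abs_f_le_dist_y0; lra|].
    apply Rmult_le_compat_l; [lra|]; apply Rabs_le_between; lra. }
  assert (HF2 : Rabs (f ((X1 + X2) / 2) ((y X1 + y X2) / 2)) <= gamma * (K * h ^ 2 / 4 + delta)).
  { eapply Rle_trans; [apply abs_f_le_dist_y0; lra|].
    apply Rmult_le_compat_l; [lra|]; apply Rabs_le_between; lra. }
  apply Rabs_le_between in HD, HF1, HF2; apply Rabs_le_between; lra.
Qed.

End ReducedSolution.

Lemma residual_le c Ac gamma K E h N :
  0 <= c <= Ac -> 0 <= gamma -> 0 <= K -> 0 <= E -> 0 < N -> h <= 2 / N -> 0 <= h ->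
  c * (2 * K * h ^ 2 + 4 * (E / N ^ 2)) + gamma * (K * h ^ 2 / 4 + E / N ^ 2)
  <= (Ac * (8 * K + 4 * E) + gamma * (K + E) + 1) / N ^ 2.
Proof.
  intros Hc Hg HK HE HN Hh Hh0.
  assert (HW : 0 < / N ^ 2) by (apply Rinv_0_lt_compat, pow_lt, HN).
  assert (Hh2 : h ^ 2 <= 4 * / N ^ 2)
    by (replace (4 * / N ^ 2) with ((2 / N) ^ 2) by (field; lra); apply pow_incr; lra).
  unfold Rdiv.
  assert (c * (2 * K * h ^ 2 + 4 * (E * / N ^ 2)) <= Ac * ((8 * K + 4 * E) * / N ^ 2))
    by (apply Rmult_le_compat; try nra; pose proof (pow2_ge_0 h); nra).
  assert (gamma * (K * h ^ 2 / 4 + E * / N ^ 2) <= gamma * ((K + E) * / N ^ 2))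
    by (apply Rmult_le_compat_l; nra).
  nra.
Qed.

Theorem lemma1 :
  forall (k : nat) (f : R -> R -> R) (m gamma C0 : R),
    (2 <= k)%nat ->
    Ck k f ->
    0 < m ->
    (* m <= f_y <= gamma on [0,1] x R *)
    (forall x u l, 0 <= x <= 1 -> is_derive (fun t => f x t) u l ->
                   m <= l /\ l <= gamma) ->
    0 < C0 ->
    exists C : R, 0 < C /\
      forall (eps : R) (N : nat) (y : R -> R),
        0 < eps ->
        (0 < N)%nat -> (N mod 4 = 0)%nat ->
        shlambda eps m N = 2 * eps * ln (INR N) / sqrt m ->
        eps <= C0 / INR N ->
        (* y solves eps^2 y'' = f(x,y) on (0,1), y(0) = y(1) = 0 *)
        (forall x, 0 <= x <= 1 -> continuity_pt y x) ->
        (exists dy : R -> R, forall x, 0 < x < 1 ->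
            is_derive y x (dy x) /\
            is_derive dy x (f x (y x) / (eps ^ 2))) ->
        y 0 = 0 -> y 1 = 0 ->
        forall i : nat,
          (N / 4 <= i)%nat -> (i <= N / 2 - 1)%nat ->
          let x := xm eps m N in
          x (N / 4)%nat <= x (i - 1)%nat <= 1 / 2 ->
          x (N / 4)%nat <= x i <= 1 / 2 ->
          x (N / 4)%nat <= x (i + 1)%nat <= 1 / 2 ->
          Rabs (Fop eps m gamma N f (fun j => y (x j)) i) <= C / (INR N) ^ 2.
Proof.
  intros k f m gamma C0 Hk Hf Hm Hfy HC0.
  destruct (Ck_le 2 k f Hk Hf) as (Hcf & fx & fy & Hdx & Hdy
    & (Hcfx & fxx & fxy & Hxx & Hxy & Cxx & Cxy) & (Hcfy & fyx & fyy & Hyx & Hyy & Cyx & Cyy)).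
  assert (Hb : forall x u, 0 <= x <= 1 -> m <= fy x u <= gamma)
    by (intros x u Hx; exact (Hfy x u _ Hx (Hdy x u))).
  assert (Hgamma : 0 < gamma) by (pose proof (Hb 0 0 ltac:(lra)); lra).
  edestruct (y0_d2_bounded f fx fy fxx fxy fyx fyy m gamma) as [K [HK0 HK]]; try eassumption.
  set (E := outer_const f m K C0); set (Ac := scheme_coef gamma (sqrt gamma / C0)).
  assert (HE : 0 <= E) by exact (outer_const_nonneg f m Hm K C0 HK0).
  assert (HAc : 0 <= Ac) by (apply Rmult_le_pos; [lra | apply pow2_ge_0]).
  exists (Ac * (8 * K + 4 * E) + gamma * (K + E) + 1); split; [nra|].
  intros eps N y Heps HN Hmod Hlam HepsN Hyc [dy Hyd] Hy0 Hy1 i Hi1 Hi2 x Hx0 Hx1 Hx2.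
  pose proof (N_quarters N HN Hmod).
  assert (Hlam0 : 0 < shlambda eps m N) by (apply shlambda_pos; lia || lra).
  assert (Hi : (N / 4 < i)%nat) by exact (coarse_index eps m N HN Hmod i Hlam0 Hi1 (proj1 Hx0)).
  assert (Hc := scheme_coef_coarse_le eps m gamma N C0 Heps Hgamma HC0 HN ltac:(lra) HepsN).
  destruct (coarse_step_bounds eps m N HN ltac:(lra)) as [Hh1 Hh2].
  assert (HNr : 0 < INR N) by (apply lt_0_INR, HN).
  assert (0 < 1 / INR N) by (apply Rdiv_lt_0_compat; lra).
  assert (Hxq : x (N / 4)%nat = shlambda eps m N) by exact (xm_quarter eps m N HN Hmod).
  assert (Hclose : forall t, x (N / 4)%nat <= t <= 1 / 2 -> Rabs (y t - y0 f t) <= E / INR N ^ 2)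
    by (intros t Ht; eapply (solution_near_y0_outside_layers f fx fy fxx fxy fyx fyy m gamma)
          with (eps := eps) (dy := dy); try eassumption; lra).
  rewrite (Fop_coarse eps m N HN Hmod) by (lia || lra).
  eapply Rle_trans; [apply (coarse_residual_le f fx fy fxx fxy fyx fyy m gamma)
      with (K := K) (h := coarse_step eps m N) (delta := E / INR N ^ 2)|].
  all: try eassumption; try (apply Hclose); try lra.
  - apply (xm_coarse_succ eps m N HN Hmod); lia.
  - replace i with (i + 1 - 1)%nat at 2 by lia; apply (xm_coarse_succ eps m N HN Hmod); lia.
  - apply residual_le; try exact Hc; lra.
Qed.
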